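(* Let $\mathbf S=\{S^m\}$, $\mathbf Z=\{Z_m\}$ be a general source with general two-sided information and $d_m$ a general sequence of distortion functions. Then $\underline{R_{\mathbf S|\mathbf Z}}(D_E)\le\underline H(\mathbf S|\mathbf Z)$ for every $D_E\ge D'_{E,\min}$, where $D'_{E,\min}=\inf_{\mathbf g}\overline D(\mathbf S,\mathbf g(\mathbf S))$. Moreover, if $\check{\mathcal S}^m=\mathcal S^m$, $d_m(s^m,\check s^m)=1\{s^m\ne\check s^m\}$ and $D_E=0$, then $\underline{R_{\mathbf S|\mathbf Z}}(0)=\underline H(\mathbf S|\mathbf Z)$.
   Context: A general source with general two-sided information: for each $m\ge1$, $(S^m,Z_m)$ is a pair of random variables with an arbitrary joint distribution $P_{S^mZ_m}$ on a finite set $\mathcal S^m\times\mathcal Z_m$; $\check{\mathcal S}^m$ are finite reconstruction sets and $d_m:\mathcal S^m\times\check{\mathcal S}^m\to[0,\infty)$ is an arbitrary sequence of distortion functions. All logarithms are base 2. For real random variables $\{B_m\}$: $\operatorname{p\text{-}liminf}_mB_m=\sup\{r:\lim_m\mathbb P(B_m<r)=0\}$, $\operatorname{p\text{-}limsup}_mB_m=\inf\{r:\lim_m\mathbb P(B_m>r)=0\}$. Definitions: $\underline H(\mathbf S|\mathbf Z)=\operatorname{p\text{-}liminf}_m\frac1m\log\frac{1}{P_{S^m|Z_m}(S^m|Z_m)}$; $\overline I(\mathbf S;\tilde{\mathbf S}|\mathbf Z)=\operatorname{p\text{-}limsup}_m\frac1m\log\frac{P_{\tilde S^m|S^mZ_m}(\tilde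 S^m|S^m,Z_m)}{P_{\tilde S^m|Z_m}(\tilde S^m|Z_m)}$; $\underline D(\mathbf S,\tilde{\mathbf S})=\inf\{d:\liminf_m\mathbb P[d_m(S^m,\tilde S^m)\ge d]<1\}$ and $\overline D(\mathbf S,\tilde{\mathbf S})=\operatorname{p\text{-}limsup}_m d_m(S^m,\tilde S^m)$. $\mathbf g$ ranges over sequences of functions $g^m:\mathcal S^m\to\check{\mathcal S}^m$, and $\mathbf g(\mathbf S)=\{g^m(S^m)\}$. With $D_{E,\min}=\inf_{\mathbf g}\underline D(\mathbf S,\mathbf g(\mathbf S))$, the lossy-equivocation is $\underline{R_{\mathbf S|\mathbf Z}}(D_E)=\inf_{P_{\check{\mathbf S}|\mathbf S\mathbf Z}:\underline D(\mathbf S,\check{\mathbf S})\le D_E}\overline I(\mathbf S;\check{\mathbf S}|\mathbf Z)$ for $D_E\ge D_{E,\min}$ (infimum over sequences of conditional distributions $P_{\check S^m|S^mZ_m}$ on $\check{\mathcal S}^m$) and $\underline{R_{\mathbf S|\mathbf Z}}(D_E)=+\infty$ for $D_E<D_{E,\min}$. *)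

From mathcomp Require Import all_boot.
From Stdlib Require Import Reals ClassicalEpsilon.
Set Implicit Arguments.
Unset Strict Implicit.
Unset Printing Implicit Defensive.

Local Open Scope R_scope.

Inductive ER := ERfin (r : R) | ERpinf | ERninf.

Definition ER_le (x y : ER) : Prop :=
  match x, y with
  | ERninf, _ => True
  | _, ERpinf => True
  | ERfin a, ERfin b => a <= b
  | _, _ => False
  end.

Definition ER_lt (x y : ER) : Prop := ER_le x y /\ x <> y.

Definition ER_opp (x : ER) : ER :=
  match x with ERfin r => ERfin (- r) | ERpinf => ERninf | ERninf => ERpinf end.

(* supremum of a set of extended reals (sup of the empty set is -oo) *)
Definition ER_sup (A : ER -> Prop) : ER :=
  if excluded_middle_informative
       (A ERpinf \/ ~ bound (fun r => A (ERfin r)))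
  then ERpinf
  else if excluded_middle_informative (exists r, A (ERfin r))
  then ERfin (epsilon (inhabits 0) (is_lub (fun r => A (ERfin r))))
  else ERninf.

(* infimum of a set of extended reals (inf of the empty set is +oo) *)
Definition ER_inf (A : ER -> Prop) : ER :=
  ER_opp (ER_sup (fun x => A (ER_opp x))).

Definition ER_liminf (a : nat -> R) : ER :=
  ER_sup (fun x => exists N : nat,
            x = ER_inf (fun y => exists m : nat, (N <= m)%nat /\ y = ERfin (a m))).

Definition log2 (x : R) : R := ln x / ln 2.

Definition sumR (T : finType) (f : T -> R) : R := \big[Rplus/0]_(w : T) f w.

Definition prob_lt (T : finType) (mu B : T -> R) (r : R) : R :=
  sumR (fun w => if Rlt_dec (B w) r then mu w else 0).
Definition prob_gt (T : finType) (mu B : T -> R) (r : R) : R :=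
  sumR (fun w => if Rlt_dec r (B w) then mu w else 0).
Definition prob_ge (T : finType) (mu B : T -> R) (r : R) : R :=
  sumR (fun w => if Rle_dec r (B w) then mu w else 0).

(* p-liminf / p-limsup, given the sequences m |-> P[B_m < r] resp. P[B_m > r] *)
Definition p_liminf (plt : nat -> R -> R) : ER :=
  ER_sup (fun x => exists r, x = ERfin r /\ Un_cv (fun m => plt m r) 0).
Definition p_limsup (pgt : nat -> R -> R) : ER :=
  ER_inf (fun x => exists r, x = ERfin r /\ Un_cv (fun m => pgt m r) 0).

(* S m = alphabet of S^m, Z m = alphabet of Z_m, Sc m = reconstruction set,
   P m s z = P_{S^m Z_m}(s,z), d m = distortion function d_m. *)

Definition is_pmf (S Z : nat -> finType) (P : forall m, S m -> Z m -> R) : Prop :=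
  forall m, (forall s z, 0 <= P m s z) /\ sumR (fun w : (S m * Z m)%type => P m w.1 w.2) = 1.

Definition PZ (S Z : nat -> finType) (P : forall m, S m -> Z m -> R) m (z : Z m) : R :=
  sumR (fun s : S m => P m s z).

Definition Hlow (S Z : nat -> finType) (P : forall m, S m -> Z m -> R) : ER :=
  p_liminf (fun m r =>
    prob_lt (fun w : (S m * Z m)%type => P m w.1 w.2)
            (fun w => / INR m * log2 (/ (P m w.1 w.2 / PZ P w.2))) r).

Definition is_channel (S Z Sc : nat -> finType)
  (W : forall m, Sc m -> S m -> Z m -> R) : Prop :=
  forall m, (forall c s z, 0 <= W m c s z) /\
            (forall s z, sumR (fun c : Sc m => W m c s z) = 1).

Definition Qj (S Z Sc : nat -> finType) (P : forall m, S m -> Z m -> R)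
  (W : forall m, Sc m -> S m -> Z m -> R) m (w : (Sc m * (S m * Z m))%type) : R :=
  W m w.1 w.2.1 w.2.2 * P m w.2.1 w.2.2.

Definition PcZ (S Z Sc : nat -> finType) (P : forall m, S m -> Z m -> R)
  (W : forall m, Sc m -> S m -> Z m -> R) m (c : Sc m) (z : Z m) : R :=
  sumR (fun s : S m => W m c s z * P m s z) / PZ P z.

Definition Iup (S Z Sc : nat -> finType) (P : forall m, S m -> Z m -> R)
  (W : forall m, Sc m -> S m -> Z m -> R) : ER :=
  p_limsup (fun m r =>
    prob_gt (Qj P W (m:=m))
      (fun w => / INR m * log2 (W m w.1 w.2.1 w.2.2 / PcZ P W w.1 w.2.2)) r).

Definition Dlow (S Z Sc : nat -> finType) (P : forall m, S m -> Z m -> R)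
  (d : forall m, S m -> Sc m -> R)
  (W : forall m, Sc m -> S m -> Z m -> R) : ER :=
  ER_inf (fun x => exists D, x = ERfin D /\
    ER_lt (ER_liminf (fun m =>
             prob_ge (Qj P W (m:=m)) (fun w => d m w.2.1 w.1) D)) (ERfin 1)).

Definition Dup (S Z Sc : nat -> finType) (P : forall m, S m -> Z m -> R)
  (d : forall m, S m -> Sc m -> R)
  (W : forall m, Sc m -> S m -> Z m -> R) : ER :=
  p_limsup (fun m r => prob_gt (Qj P W (m:=m)) (fun w => d m w.2.1 w.1) r).

Definition det_channel (S Z Sc : nat -> finType) (g : forall m, S m -> Sc m)
  : forall m, Sc m -> S m -> Z m -> R :=
  fun m c s _ => if c == g m s then 1 else 0.

Definition DEmin (S Z Sc : nat -> finType) (P : forall m, S m -> Z m -> R)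
  (d : forall m, S m -> Sc m -> R) : ER :=
  ER_inf (fun x => exists g : forall m, S m -> Sc m,
            x = Dlow P d (det_channel (Z := Z) g)).

Definition DEmin' (S Z Sc : nat -> finType) (P : forall m, S m -> Z m -> R)
  (d : forall m, S m -> Sc m -> R) : ER :=
  ER_inf (fun x => exists g : forall m, S m -> Sc m,
            x = Dup P d (det_channel (Z := Z) g)).

Definition Rlow (S Z Sc : nat -> finType) (P : forall m, S m -> Z m -> R)
  (d : forall m, S m -> Sc m -> R) (DE : R) : ER :=
  if excluded_middle_informative (ER_lt (ERfin DE) (DEmin P d)) then ERpinf
  else ER_inf (fun x => exists W : forall m, Sc m -> S m -> Z m -> R,
         is_channel W /\ ER_le (Dlow P d W) (ERfin DE) /\ x = Iup P W).

Definition hamming (S : nat -> finType) : forall m, S m -> S m -> R :=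
  fun m s c => if s == c then 0 else 1.

(* Decode every s to a reconstruction g*(s) of least distortion;
   as some decoder has P[d(S, g S) > D] -> 0 for every D > D_E, so has g*.  For
   r just above H(S|Z), map (s, z) to g*(s) when its entropy density is below r
   and to one fixed codeword otherwise.  The distortion can exceed D only on the
   high-density event, whose probability is at most 1 - del infinitely often.
   A low-density pair goes to a codeword of conditional probability at least
   P(s|z) > 2^(-nr) given z, so the information density exceeds r only on
   {C = fixed codeword, P(C|Z) < 2^(-nr)}, an event of probability <= 2^(-nr).

   Converse (block error, D_E = 0).  Write i and h for the information and
   entropy densities.  On {C = S, i <= r, h >= t} the joint law satisfies
   Q(c, s, z) <= 2^(-n(t-r)) P(c, z), hence
   P[C = S] <= P[i > r] + P[h < t] + 2^(-n(t-r)).  So if P[i > r] -> 0 and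
   P[h < t] -> 0 with r < t, then P[C = S] -> 0, contradicting D(S, C) = 0. *)

From HB Require Import structures.
From mathcomp Require Import all_boot zify.
From Stdlib Require Import Reals Lra Lia ClassicalEpsilon Classical.
Local Open Scope R_scope.
Set Implicit Arguments.
Unset Strict Implicit.

HB.instance Definition _ := Monoid.isComLaw.Build R 0 Rplus
  (fun a b c => esym (Rplus_assoc a b c)) Rplus_comm Rplus_0_l.

Section FiniteSums.
Variable T : finType.
Implicit Types (f g mu B : T -> R).

Lemma sumR_ext f g : (forall w, f w = g w) -> sumR f = sumR g.
Proof. by move=> fg; apply: eq_bigr. Qed.

Lemma sumR_eq0 f : (forall w, f w = 0) -> sumR f = 0.
Proof. by move=> f0; apply: big1. Qed.

Lemma sumR_le f g : (forall w, f w <= g w) -> sumR f <= sumR g.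
Proof.
move=> fg; rewrite /sumR; apply: (big_ind2 (fun a b => a <= b)) => //.
- lra.
- by move=> *; lra.
Qed.

Lemma sumR_ge0 f : (forall w, 0 <= f w) -> 0 <= sumR f.
Proof.
by move=> f0; rewrite -(@sumR_eq0 (fun _ => 0)) //; apply: sumR_le.
Qed.

Lemma sumR_plus f g : sumR (fun w => f w + g w) = sumR f + sumR g.
Proof. by rewrite /sumR big_split. Qed.

Lemma sumR_scal c f : sumR (fun w => c * f w) = c * sumR f.
Proof.
rewrite /sumR; apply: (big_ind2 (fun a b => a = c * b)) => //.
- ring.
- by move=> ? ? ? ? -> ->; ring.
Qed.

Lemma sumR_ge_term f a : (forall w, 0 <= f w) -> f a <= sumR f.
Proof.
move=> f0; rewrite /sumR (bigD1 a) //=.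
have : 0 <= \big[Rplus/0]_(i | i != a) f i.
  by apply: (big_ind (fun x => 0 <= x)) => //; [lra | move=> *; lra].
lra.
Qed.

Lemma sumR_delta (a : T) v : sumR (fun w => if w == a then v else 0) = v.
Proof.
rewrite /sumR (bigD1 a) //= eqxx big1 ?Rplus_0_r //.
by move=> i /negbTE ->.
Qed.

Lemma sumR_split_lt mu B r :
  sumR (fun w => if Rlt_dec (B w) r then 0 else mu w) = sumR mu - prob_lt mu B r.
Proof.
rewrite /prob_lt (@sumR_ext mu (fun w =>
  (if Rlt_dec (B w) r then mu w else 0) + (if Rlt_dec (B w) r then 0 else mu w))).
  by rewrite sumR_plus; ring.
by move=> w; case: Rlt_dec => ? /=; ring.
Qed.

Lemma prob_lt_ge0 mu B r : (forall w, 0 <= mu w) -> 0 <= prob_lt mu B r.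
Proof. by move=> mu0; apply: sumR_ge0 => w; case: Rlt_dec => ? /=; [apply: mu0 | lra]. Qed.

Lemma prob_gt_ge0 mu B r : (forall w, 0 <= mu w) -> 0 <= prob_gt mu B r.
Proof. by move=> mu0; apply: sumR_ge0 => w; case: Rlt_dec => ? /=; [apply: mu0 | lra]. Qed.

Lemma prob_ge_ge0 mu B r : (forall w, 0 <= mu w) -> 0 <= prob_ge mu B r.
Proof. by move=> mu0; apply: sumR_ge0 => w; case: Rle_dec => ? /=; [apply: mu0 | lra]. Qed.

End FiniteSums.

Lemma sumR_pair (A B : finType) (F : A -> B -> R) :
  sumR (fun p : A * B => F p.1 p.2) = sumR (fun a => sumR (fun b => F a b)).
Proof. by rewrite /sumR pair_big. Qed.

Lemma sumR_swap (A B : finType) (F : A -> B -> R) :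
  sumR (fun a => sumR (fun b => F a b)) = sumR (fun b => sumR (fun a => F a b)).
Proof. by rewrite /sumR exchange_big. Qed.

Lemma exists_argmin (T : finType) (f : T -> R) (t0 : T) :
  exists c, forall c', f c <= f c'.
Proof.
suff [c hc] : exists c, forall c', c' \in enum T -> f c <= f c'.
  by exists c => c'; apply: hc; rewrite mem_enum.
elim: (enum T) => [|a l [c hc]]; first by exists t0.
case: (Rle_dec (f a) (f c)) => h.
- exists a => c'; rewrite inE => /orP [/eqP ->|hl]; first lra.
  have := hc _ hl; lra.
- exists c => c'; rewrite inE => /orP [/eqP ->|hl]; first lra.
  exact: hc.
Qed.

Section ExtendedReals.
Implicit Types (x y z : ER) (A : ER -> Prop).

Lemma ER_le_pinf x : ER_le x ERpinf.
Proof. by case: x. Qed.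

Lemma ER_le_refl x : ER_le x x.
Proof. by case: x => //= r; apply: Rle_refl. Qed.

Lemma ER_le_trans x y z : ER_le x y -> ER_le y z -> ER_le x z.
Proof. case: x; case: y; case: z => //= *; lra. Qed.

Lemma ER_le_antisym x y : ER_le x y -> ER_le y x -> x = y.
Proof. case: x; case: y => //= a b h1 h2; f_equal; lra. Qed.

Lemma ER_le_total x y : ER_le x y \/ ER_le y x.
Proof. case: x; case: y => //=; try tauto; move=> a b; lra. Qed.

Lemma ER_le_approx x c :
  (forall eps, 0 < eps -> ER_le x (ERfin (c + eps))) -> ER_le x (ERfin c).
Proof.
case: x => [a| |] h //=; last by case: (h 1 Rlt_0_1).
apply: Rnot_lt_le => ca; have /= := h ((a - c) / 2) ltac:(lra); lra.
Qed.

Lemma ER_opp_opp x : ER_opp (ER_opp x) = x.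
Proof. by case: x => //= r; rewrite Ropp_involutive. Qed.

Lemma ER_le_opp x y : ER_le (ER_opp x) (ER_opp y) <-> ER_le y x.
Proof. case: x; case: y => //= *; split; lra. Qed.

Lemma is_lub_epsilon (E : R -> Prop) : bound E -> (exists r, E r) ->
  is_lub E (epsilon (inhabits 0) (is_lub E)).
Proof. by move=> hb he; apply: epsilon_spec; have [l hl] := completeness E hb he; exists l. Qed.

Lemma le_ER_sup A x : A x -> ER_le x (ER_sup A).
Proof.
move=> Ax; rewrite /ER_sup.
case: excluded_middle_informative => [?|hn]; first exact: ER_le_pinf.
have notp : ~ A ERpinf by move=> Ap; apply: hn; left.
case: excluded_middle_informative => [he|hne].
- have hb : bound (fun r => A (ERfin r)) by apply: NNPP => hb; apply: hn; right.
  have [hub _] := is_lub_epsilon hb he.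
  by case: x Ax => [r Ar|//|_] //=; apply: hub.
- by case: x Ax => [r Ar|//|_] //=; case: hne; exists r.
Qed.

Lemma ER_sup_le A y : (forall x, A x -> ER_le x y) -> ER_le (ER_sup A) y.
Proof.
move=> H; case: y H => [c| |] H; rewrite /ER_sup; last 1 first.
- case: excluded_middle_informative => [[Ap|hb]|?]; first by have := H _ Ap.
    by case: hb; exists 0 => r Ar; have := H _ Ar.
  by case: excluded_middle_informative => [[r Ar]|?] //=; have := H _ Ar.
- case: excluded_middle_informative => [[Ap|hb]|hn]; first by have := H _ Ap.
    by case: hb; exists c => r Ar; have := H _ Ar.
  case: excluded_middle_informative => [he|?] //=.
  have hb : bound (fun r => A (ERfin r)) by exists c => r Ar; have := H _ Ar.
  have [_ hl] := is_lub_epsilon hb he; apply: hl => r Ar; by have := H _ Ar.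
- exact: ER_le_pinf.
Qed.

Lemma ER_le_sup_approx A c :
  (forall eps, 0 < eps -> exists x, A x /\ ER_le (ERfin (c - eps)) x) ->
  ER_le (ERfin c) (ER_sup A).
Proof.
move=> H; rewrite /ER_sup.
case: excluded_middle_informative => [//|hn].
case: excluded_middle_informative => [he|hne].
- have hb : bound (fun r => A (ERfin r)) by apply: NNPP => hb; apply: hn; right.
  have [hub _] := is_lub_epsilon hb he.
  set l := epsilon _ _ in hub *; apply: Rnot_lt_le => hlt.
  have [x [Ax hx]] := H ((c - l) / 2) ltac:(lra).
  case: x Ax hx => [a Aa /= ha|Ap _|//]; last by apply: hn; left.
  by have := hub a Aa; lra.
- have [x [Ax hx]] := H 1 Rlt_0_1.
  case: x Ax hx => [a Aa _|Ap _|//]; last by apply: hn; left.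
  by case: hne; exists a.
Qed.

Lemma ER_inf_le A x : A x -> ER_le (ER_inf A) x.
Proof.
move=> Ax; rewrite /ER_inf -(ER_opp_opp x) ER_le_opp.
by apply: le_ER_sup; rewrite ER_opp_opp.
Qed.

Lemma le_ER_inf A y : (forall x, A x -> ER_le y x) -> ER_le y (ER_inf A).
Proof.
move=> H; rewrite /ER_inf -(ER_opp_opp y) ER_le_opp.
by apply: ER_sup_le => z Az; rewrite -(ER_opp_opp z) ER_le_opp; apply: H.
Qed.

Lemma ER_inf_le_witness A c D :
  ER_le (ER_inf A) (ERfin c) -> c < D -> exists x, A x /\ ER_le x (ERfin D).
Proof.
move=> H cD; apply: NNPP => hn.
have : ER_le (ERfin D) (ER_inf A).
  apply: le_ER_inf => x Ax; case: (ER_le_total x (ERfin D)) => // h.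
  by case: hn; exists x.
by move/ER_le_trans/(_ H) => /=; lra.
Qed.

End ExtendedReals.

Lemma Un_cv0_lt (u : nat -> R) eps :
  Un_cv u 0 -> 0 < eps -> exists N, forall n, (N <= n)%nat -> u n < eps.
Proof.
move=> cv eps0; have [N hN] := cv eps eps0; exists N => n Nn.
by have /Rabs_def2 [] := hN n ltac:(lia); rewrite Rminus_0_r.
Qed.

Lemma Un_cv0_squeeze (u v : nat -> R) :
  (forall n, (0 < n)%nat -> 0 <= u n <= v n) -> Un_cv v 0 -> Un_cv u 0.
Proof.
move=> uv cv eps eps0; have [N hN] := cv eps eps0.
exists N.+1 => n Nn; have := hN n ltac:(lia); have := uv n ltac:(lia).
rewrite /R_dist !Rminus_0_r => un; rewrite !Rabs_pos_eq; lra.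
Qed.

Lemma Un_cv0_eq0 (u : nat -> R) : (forall n, u n = 0) -> Un_cv u 0.
Proof. by move=> u0 eps eps0; exists O => n _; rewrite u0 /R_dist Rminus_0_r Rabs_R0. Qed.

Lemma Un_cv0_plus (u v : nat -> R) :
  Un_cv u 0 -> Un_cv v 0 -> Un_cv (fun n => u n + v n) 0.
Proof. by move=> cu cv; have := CV_plus _ _ _ _ cu cv; rewrite Rplus_0_r. Qed.

Lemma not_Un_cv0_frequently (u : nat -> R) : (forall n, 0 <= u n) -> ~ Un_cv u 0 ->
  exists del, 0 < del /\ forall N, exists n, (N <= n)%nat /\ del <= u n.
Proof.
move=> u0 ncv; apply: NNPP => nfreq; apply: ncv => eps eps0.
apply: NNPP => nN; apply: nfreq; exists eps; split => // N.
apply: NNPP => nn; apply: nN; exists N => n Nn.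
rewrite /R_dist Rminus_0_r Rabs_pos_eq //.
by apply: Rnot_le_lt => le; apply: nn; exists n; split => //; lia.
Qed.

Lemma ER_liminf_le_frequently (a : nat -> R) c :
  (forall N, exists m, (N <= m)%nat /\ a m <= c) -> ER_le (ER_liminf a) (ERfin c).
Proof.
move=> freq; apply: ER_sup_le => _ [N ->].
have [m [Nm am]] := freq N.
by apply: ER_le_trans (ER_inf_le _) _; first by exists m.
Qed.

Lemma ER_liminf_ge_cv (a e : nat -> R) c :
  Un_cv e 0 -> (forall m, (0 < m)%nat -> c - e m <= a m) ->
  ER_le (ERfin c) (ER_liminf a).
Proof.
move=> cv ae; apply: ER_le_sup_approx => eps eps0.
have [N hN] := Un_cv0_lt cv eps0.
exists (ER_inf (fun y => exists m, (N.+1 <= m)%nat /\ y = ERfin (a m))).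
split; first by exists N.+1.
apply: le_ER_inf => _ [m [Nm ->]] /=.
have := hN m ltac:(lia); have := ae m ltac:(lia); lra.
Qed.

Lemma p_limsup_le (pgt : nat -> R -> R) r :
  Un_cv (fun m => pgt m r) 0 -> ER_le (p_limsup pgt) (ERfin r).
Proof. by move=> cv; apply: ER_inf_le; exists r. Qed.

Lemma p_liminf_le_not_cv0 (plt : nat -> R -> R) h r :
  ER_le (p_liminf plt) (ERfin h) -> h < r -> ~ Un_cv (fun m => plt m r) 0.
Proof.
move=> le hr cv.
have : ER_le (ERfin r) (p_liminf plt) by apply: le_ER_sup; exists r.
by move/ER_le_trans/(_ le) => /=; lra.
Qed.

Definition nlog2 (n : nat) (b : R) : R := / INR n * log2 b.
Definition twopow (n : nat) (r : R) : R := exp (INR n * (r * ln 2)).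

Lemma ln2_pos : 0 < ln 2.
Proof. have := ln_lt_2; lra. Qed.

Lemma Rinv_ge0 x : 0 <= x -> 0 <= / x.
Proof.
case=> [x0|<-]; last by rewrite Rinv_0; lra.
by apply: Rlt_le; apply: Rinv_0_lt_compat.
Qed.

Lemma twopow_pos n r : 0 < twopow n r.
Proof. exact: exp_pos. Qed.

Lemma twopow_add n r r' : twopow n (r + r') = twopow n r * twopow n r'.
Proof. by rewrite /twopow -exp_plus; f_equal; ring. Qed.

Lemma twopow_opp n r : twopow n (- r) = / twopow n r.
Proof. by rewrite /twopow -exp_Ropp; f_equal; ring. Qed.

Lemma twopow_lt n r r' : (0 < n)%nat -> r < r' -> twopow n r < twopow n r'.
Proof.
move=> n0 rr; apply: exp_increasing; apply: Rmult_lt_compat_l.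
  by apply: lt_0_INR; lia.
by apply: Rmult_lt_compat_r => //; apply: ln2_pos.
Qed.

Lemma twopow_nlog2 n b : (0 < n)%nat -> 0 < b -> twopow n (nlog2 n b) = b.
Proof.
move=> n0 b0; have := ln2_pos; have : 0 < INR n by apply: lt_0_INR; lia.
by rewrite /twopow /nlog2 /log2 -{2}(exp_ln b) // => *; f_equal; field; lra.
Qed.

Lemma lt_nlog2 n b r : (0 < n)%nat -> 0 < b -> r < nlog2 n b <-> twopow n r < b.
Proof.
move=> n0 b0; rewrite -{2}(twopow_nlog2 n0 b0); split; first exact: twopow_lt.
move=> lt; apply: Rnot_le_lt => -[gt|eq]; last by rewrite eq in lt; lra.
by have := twopow_lt n0 gt; lra.
Qed.

Lemma nlog2_lt n b r : (0 < n)%nat -> 0 < b -> nlog2 n b < r <-> b < twopow n r.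
Proof.
move=> n0 b0; rewrite -{2}(twopow_nlog2 n0 b0); split; first exact: twopow_lt.
move=> lt; apply: Rnot_le_lt => -[gt|eq]; last by rewrite eq in lt; lra.
by have := twopow_lt n0 gt; lra.
Qed.

Lemma nlog2_le n a b : 0 < a -> a <= b -> nlog2 n a <= nlog2 n b.
Proof.
move=> a0 ab; apply: Rmult_le_compat_l; first by apply: Rinv_ge0; apply: pos_INR.
apply: Rmult_le_compat_r; first by apply: Rinv_ge0; have := ln2_pos; lra.
by case: ab => [ab|<-]; [apply: Rlt_le; apply: ln_increasing | lra].
Qed.

Lemma twopow_cv0 r : r < 0 -> Un_cv (fun n => twopow n r) 0.
Proof.
move=> r0 eps eps0; have k0 : 0 < - (r * ln 2).
  by have := ln2_pos; nra.
have [N hN] := INR_archimed (- (r * ln 2)) (/ eps) k0.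
exists N => n Nn; rewrite /R_dist Rminus_0_r Rabs_pos_eq; last exact: Rlt_le (twopow_pos _ _).
have ie := Rinv_0_lt_compat eps eps0.
have nN : INR N * - (r * ln 2) <= INR n * - (r * ln 2).
  by apply: Rmult_le_compat_r; [lra | apply: le_INR].
have big : / eps < exp (INR n * - (r * ln 2)).
  by have := exp_ineq1 (INR n * - (r * ln 2)) ltac:(lra); lra.
rewrite /twopow -(Rinv_inv eps); have -> : INR n * (r * ln 2) = - (INR n * - (r * ln 2)) by ring.
rewrite exp_Ropp; apply: Rinv_lt_contravar => //.
by apply: Rmult_lt_0_compat; [apply: Rinv_0_lt_compat | apply: exp_pos].
Qed.

Section Source.
Unset Implicit Arguments.
Variables (S Z : nat -> finType) (P : forall m, S m -> Z m -> R).
Set Implicit Arguments.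
Hypothesis hP : is_pmf P.

Local Notation mu m := (fun x : (S m * Z m)%type => P m x.1 x.2).

Lemma P_ge0 m s z : 0 <= P m s z.
Proof. by case: (hP m) => h _; apply: h. Qed.

Lemma P_sum1 m : sumR (mu m) = 1.
Proof. by case: (hP m). Qed.

Lemma P_le_PZ m s z : P m s z <= PZ P z.
Proof. by apply: (@sumR_ge_term _ (fun s => P m s z)) => s'; apply: P_ge0. Qed.

Lemma PZ_sum1 m : sumR (fun z : Z m => PZ P z) = 1.
Proof. by rewrite /PZ -sumR_swap -(sumR_pair (P m)) P_sum1. Qed.

Lemma PZ_ge0 m (z : Z m) : 0 <= PZ P z.
Proof. by apply: sumR_ge0 => s; apply: P_ge0. Qed.

Definition ent m (x : S m * Z m) : R := nlog2 m (/ (P m x.1 x.2 / PZ P x.2)).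

Lemma Hlow_ent : Hlow P = p_liminf (fun m r => prob_lt (mu m) (@ent m) r).
Proof. by []. Qed.

Lemma ent_ge0 m (x : S m * Z m) : 0 < P m x.1 x.2 -> 0 <= ent x.
Proof.
move=> p0; have pz := P_le_PZ x.1 x.2.
have -> : 0 = nlog2 m 1 by rewrite /nlog2 /log2 ln_1 /Rdiv Rmult_0_l Rmult_0_r.
apply: nlog2_le; first lra.
rewrite -Rinv_1; apply: Rinv_le_contravar; first by apply: Rdiv_lt_0_compat; lra.
by apply: (Rmult_le_reg_r (PZ P x.2)); [lra | rewrite /Rdiv Rmult_assoc Rinv_l; lra].
Qed.

Lemma Hlow_ge0 : ER_le (ERfin 0) (Hlow P).
Proof.
rewrite Hlow_ent; apply: le_ER_sup; exists 0; split => //; apply: Un_cv0_eq0 => n.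
apply: sumR_eq0 => x; case: Rlt_dec => [neg|?] //=.
by case: (Rle_lt_or_eq_dec _ _ (P_ge0 x.1 x.2)) => // p0; have := ent_ge0 p0; lra.
Qed.

Definition fun_channel (Sc : nat -> finType) (f : forall m, S m * Z m -> Sc m) :
  forall m, Sc m -> S m -> Z m -> R :=
  fun m c s z => if c == f m (s, z) then 1 else 0.

Lemma fun_channel_is_channel (Sc : nat -> finType) (f : forall m, S m * Z m -> Sc m) :
  is_channel (fun_channel f).
Proof.
move=> m; split=> [c s z|s z]; last exact: sumR_delta.
by rewrite /fun_channel; case: eqP => ?; lra.
Qed.

Lemma sumR_Qj_fun_channel (Sc : nat -> finType) (f : forall m, S m * Z m -> Sc m) m
    (H : Sc m * (S m * Z m) -> R -> R) : (forall w, H w 0 = 0) ->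
  sumR (fun w => H w (Qj P (fun_channel f) w))
  = sumR (fun x => H (f m x, x) (P m x.1 x.2)).
Proof.
move=> H0; pose F c x := H (c, x) (Qj P (fun_channel f) (c, x)).
rewrite (@sumR_ext _ _ (fun w => F w.1 w.2)); last by case.
rewrite sumR_pair sumR_swap; apply: sumR_ext => x.
rewrite -[RHS](sumR_delta (f m x)); apply: sumR_ext => c.
rewrite /F /Qj /fun_channel /= -surjective_pairing.
by case: eqP => [->|_]; rewrite ?Rmult_1_l ?Rmult_0_l.
Qed.

Lemma prob_ge_fun_channel (Sc : nat -> finType) (d : forall m, S m -> Sc m -> R)
    (f : forall m, S m * Z m -> Sc m) m D :
  prob_ge (Qj P (fun_channel f) (m:=m)) (fun w => d m w.2.1 w.1) D
  = prob_ge (mu m) (fun x => d m x.1 (f m x)) D.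
Proof.
apply: (sumR_Qj_fun_channel f (H := fun w v => if Rle_dec D (d m w.2.1 w.1) then v else 0)).
by move=> w; case: Rle_dec.
Qed.

Lemma prob_gt_fun_channel (Sc : nat -> finType) (d : forall m, S m -> Sc m -> R)
    (f : forall m, S m * Z m -> Sc m) m D :
  prob_gt (Qj P (fun_channel f) (m:=m)) (fun w => d m w.2.1 w.1) D
  = prob_gt (mu m) (fun x => d m x.1 (f m x)) D.
Proof.
apply: (sumR_Qj_fun_channel f (H := fun w v => if Rlt_dec D (d m w.2.1 w.1) then v else 0)).
by move=> w; case: Rlt_dec.
Qed.

Lemma Dlow_le_frequently (Sc : nat -> finType) (d : forall m, S m -> Sc m -> R)
    (W : forall m, Sc m -> S m -> Z m -> R) DE :
  (forall D, DE < D -> exists del, 0 < del /\ forall N, exists m, (N <= m)%nat /\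
     prob_ge (Qj P W (m:=m)) (fun w => d m w.2.1 w.1) D <= 1 - del) ->
  ER_le (Dlow P d W) (ERfin DE).
Proof.
move=> freq; apply: ER_le_approx => eps eps0; apply: ER_inf_le; exists (DE + eps).
split=> //; have [del [del0 fr]] := freq (DE + eps) ltac:(lra).
have le := ER_liminf_le_frequently fr.
split; first by apply: ER_le_trans le _ => /=; lra.
by move=> eq; rewrite eq /= in le; lra.
Qed.

Section Channel.
Unset Implicit Arguments.
Variables (Sc : nat -> finType) (W : forall m, Sc m -> S m -> Z m -> R).
Set Implicit Arguments.
Hypothesis hW : is_channel W.

Lemma W_ge0 m c s z : 0 <= W m c s z.
Proof. by case: (hW m) => h _; apply: h. Qed.

Lemma Qj_ge0 m (w : Sc m * (S m * Z m)) : 0 <= Qj P W w.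
Proof. by apply: Rmult_le_pos; [apply: W_ge0 | apply: P_ge0]. Qed.

Lemma sumR_channel m (h : S m * Z m -> R) :
  sumR (fun w : Sc m * (S m * Z m) => W m w.1 w.2.1 w.2.2 * h w.2) = sumR h.
Proof.
rewrite (sumR_pair (fun c x => W m c x.1 x.2 * h x)) sumR_swap.
apply: sumR_ext => x; rewrite (@sumR_ext _ _ (fun c => h x * W m c x.1 x.2)).
  by rewrite sumR_scal; case: (hW m) => _ ->; ring.
by move=> c; ring.
Qed.

Lemma Qj_sum1 m : sumR (Qj P W (m:=m)) = 1.
Proof. by rewrite -(P_sum1 m) -(sumR_channel (mu m)). Qed.

Definition PcZj m (c : Sc m) (z : Z m) : R := sumR (fun s => W m c s z * P m s z).

Lemma PcZj_ge0 m (c : Sc m) z : 0 <= PcZj c z.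
Proof. by apply: sumR_ge0 => s; apply: Rmult_le_pos; [apply: W_ge0 | apply: P_ge0]. Qed.

Lemma sumR_Qj_marginal_cz m (h : Sc m -> Z m -> R) :
  sumR (fun w : Sc m * (S m * Z m) => h w.1 w.2.2 * Qj P W w)
  = sumR (fun c => sumR (fun z => h c z * PcZj c z)).
Proof.
rewrite (sumR_pair (fun c x => h c x.2 * (W m c x.1 x.2 * P m x.1 x.2))).
apply: sumR_ext => c.
rewrite (sumR_pair (fun s z => h c z * (W m c s z * P m s z))) sumR_swap.
by apply: sumR_ext => z; rewrite /PcZj -sumR_scal.
Qed.

Lemma PcZj_sum1 m : sumR (fun c : Sc m => sumR (fun z => PcZj c z)) = 1.
Proof.
rewrite -(Qj_sum1 m).
transitivity (sumR (fun c : Sc m => sumR (fun z => 1 * PcZj c z))).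
  by apply: sumR_ext => c; apply: sumR_ext => z; ring.
by rewrite -sumR_Qj_marginal_cz; apply: sumR_ext => w; rewrite /Qj; ring.
Qed.

Lemma Qj_le_PcZj m (c : Sc m) s z : W m c s z * P m s z <= PcZj c z.
Proof.
apply: (@sumR_ge_term _ (fun s => W m c s z * P m s z)) => s'.
by apply: Rmult_le_pos; [apply: W_ge0 | apply: P_ge0].
Qed.

Lemma PcZj_PcZ m (c : Sc m) z : PcZj c z = PcZ P W c z * PZ P z.
Proof.
rewrite /PcZ -/(PcZj c z).
case: (Rle_lt_or_eq_dec _ _ (PZ_ge0 z)) => [PZp|PZ0]; first by field; lra.
rewrite -PZ0 Rmult_0_r; apply: sumR_eq0 => s.
have -> : P m s z = 0 by have := P_le_PZ s z; have := P_ge0 s z; lra.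
ring.
Qed.

Lemma PcZ_ge m (c : Sc m) s z : W m c s z * P m s z / PZ P z <= PcZ P W c z.
Proof. by apply: Rmult_le_compat_r; [apply: Rinv_ge0; apply: PZ_ge0 | apply: Qj_le_PcZj]. Qed.

Definition info m (w : Sc m * (S m * Z m)) : R :=
  nlog2 m (W m w.1 w.2.1 w.2.2 / PcZ P W w.1 w.2.2).

Lemma Iup_info : Iup P W = p_limsup (fun m r => prob_gt (Qj P W (m:=m)) (@info m) r).
Proof. by []. Qed.

Lemma prob_output_unlikely_le m (c0 : Sc m) q : 0 <= q ->
  sumR (fun w : Sc m * (S m * Z m) => if Rlt_dec (PcZ P W w.1 w.2.2) q
                                       then (if w.1 == c0 then Qj P W w else 0) else 0)
  <= q.
Proof.
move=> q0; pose h c z := if Rlt_dec (PcZ P W c z) q then (if c == c0 then 1 else 0) else 0.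
rewrite (@sumR_ext _ _ (fun w => h w.1 w.2.2 * Qj P W w)); last first.
  by move=> w; rewrite /h; case: Rlt_dec => ? /=; [case: eqP => _|]; ring.
rewrite sumR_Qj_marginal_cz (@sumR_ext _ _
  (fun c => if c == c0 then sumR (fun z => h c0 z * PcZj c0 z) else 0)); last first.
  move=> c; case: eqVneq => [->//|ne]; apply: sumR_eq0 => z.
  by rewrite /h (negbTE ne); case: Rlt_dec => ? /=; ring.
rewrite sumR_delta; apply: Rle_trans (_ : _ <= sumR (fun z => q * PZ P z)) _.
  apply: sumR_le => z; rewrite /h eqxx PcZj_PcZ; have := PZ_ge0 z.
  by case: Rlt_dec => ? /=; nra.
by rewrite sumR_scal PZ_sum1; lra.
Qed.

Lemma Qj_le_twopow_PcZj n r t (w : Sc n * (S n * Z n)) : (0 < n)%nat ->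
  ~ r < info w -> ~ ent w.2 < t -> Qj P W w <= twopow n (r - t) * PcZj w.1 w.2.2.
Proof.
case: w => c [s z] /= n0 ir et.
have K0 := twopow_pos n (r - t); have X0 := PcZj_ge0 c z.
rewrite /Qj /=; case: (Rle_lt_or_eq_dec _ _ (W_ge0 c s z)) => [Wp|<-]; last by nra.
case: (Rle_lt_or_eq_dec _ _ (P_ge0 s z)) => [Pp|<-]; last by nra.
have PZp : 0 < PZ P z by have := P_le_PZ s z; lra.
have PcZp : 0 < PcZ P W c z.
  apply: Rlt_le_trans (PcZ_ge c s z).
  by apply: Rdiv_lt_0_compat => //; apply: Rmult_lt_0_compat.
have Wle : W n c s z <= twopow n r * PcZ P W c z.
  have le : W n c s z / PcZ P W c z <= twopow n r.
    apply: Rnot_lt_le => lt; apply: ir.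
    by apply/lt_nlog2 => //; apply: Rdiv_lt_0_compat.
  have := Rmult_le_compat_r _ _ _ (Rlt_le _ _ PcZp) le.
  by rewrite /Rdiv Rmult_assoc Rinv_l ?Rmult_1_r //; lra.
have Ple : P n s z <= twopow n (- t) * PZ P z.
  have le : twopow n t <= / (P n s z / PZ P z).
    apply: Rnot_lt_le => lt; apply: et.
    by apply/nlog2_lt => //; apply: Rinv_0_lt_compat; apply: Rdiv_lt_0_compat.
  have := Rinv_le_contravar _ _ (twopow_pos n t) le.
  rewrite Rinv_inv -twopow_opp => le'.
  have := Rmult_le_compat_r _ _ _ (Rlt_le _ _ PZp) le'.
  by rewrite /Rdiv Rmult_assoc Rinv_l ?Rmult_1_r //; lra.
rewrite PcZj_PcZ /Rminus twopow_add.
apply: Rle_trans (Rmult_le_compat _ _ _ _ (Rlt_le _ _ Wp) (Rlt_le _ _ Pp) Wle Ple) _.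
by right; ring.
Qed.

End Channel.

Section Achievability.
Unset Implicit Arguments.
Variables (Sc : nat -> finType) (d : forall m, S m -> Sc m -> R) (DE : R)
  (gs : forall m, S m -> Sc m).
Set Implicit Arguments.
Hypothesis hDE : ER_le (DEmin' P d) (ERfin DE).
Hypothesis gs_min : forall m s c, d m s (gs m s) <= d m s c.

Lemma min_decoder_error_cv0 D : DE < D ->
  Un_cv (fun m => prob_ge (mu m) (fun x => d m x.1 (gs m x.1)) D) 0.
Proof.
move=> DED.
have [_ [[g ->] Dg]] := ER_inf_le_witness hDE (ltac:(lra) : DE < (DE + D) / 2).
have [_ [[r [-> cv]] /= rD]] :=
  ER_inf_le_witness Dg (ltac:(lra) : (DE + D) / 2 < (DE + 3 * D) / 4).
apply: Un_cv0_squeeze cv => n _; split; first by apply: prob_ge_ge0 => x; apply: P_ge0.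
rewrite (prob_gt_fun_channel d (fun m x => g m x.1)); apply: sumR_le => x.
have := gs_min x.1 (g n x.1); have := P_ge0 x.1 x.2.
by case: Rle_dec => ? /=; case: Rlt_dec => ? /=; lra.
Qed.

Lemma DEmin_le : ER_le (DEmin P d) (ERfin DE).
Proof.
apply: ER_le_trans (ER_inf_le _) _; first by exists gs.
apply: Dlow_le_frequently => D DED; exists (1 / 2); split; first lra.
have [N hN] := Un_cv0_lt (min_decoder_error_cv0 DED) (ltac:(lra) : 0 < 1 / 2).
move=> M; exists (maxn M N); split; first exact: leq_maxl.
rewrite (prob_ge_fun_channel d (fun m x => gs m x.1)).
by have := hN (maxn M N) (leq_maxr M N); lra.
Qed.

Lemma Rlow_le_Iup W : is_channel W -> ER_le (Dlow P d W) (ERfin DE) ->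
  ER_le (Rlow P d DE) (Iup P W).
Proof.
move=> hW DW; rewrite /Rlow; case: excluded_middle_informative => [[le neq]|?] /=.
  by case: neq; apply: ER_le_antisym le DEmin_le.
by apply: ER_inf_le; exists W.
Qed.

(* The default of [odflt] is never used, as [Sc m] is inhabited: all pairs of
   entropy density at least [r] are mapped to one fixed codeword. *)
Definition thresh_decoder r m (x : S m * Z m) : Sc m :=
  if Rlt_dec (ent x) r then gs m x.1 else odflt (gs m x.1) [pick c : Sc m].

Local Notation Wr r := (fun_channel (thresh_decoder r)).

Lemma thresh_channel_Dlow r del : 0 < del ->
  (forall N, exists m, (N <= m)%nat /\ del <= prob_lt (mu m) (@ent m) r) ->
  ER_le (Dlow P d (Wr r)) (ERfin DE).
Proof.
move=> del0 freq; apply: Dlow_le_frequently => D DED; exists (del / 2); split; first lra.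
have [N hN] := Un_cv0_lt (min_decoder_error_cv0 DED) (ltac:(lra) : 0 < del / 2).
move=> M; have [n [Mn low]] := freq (maxn M N); exists n; split; first by lia.
have := hN n ltac:(lia); rewrite prob_ge_fun_channel /prob_ge => err.
apply: Rle_trans (_ : _ <= sumR (fun x => (if Rlt_dec (ent x) r then 0 else P n x.1 x.2)
  + (if Rle_dec D (d n x.1 (gs n x.1)) then P n x.1 x.2 else 0))) _.
  apply: sumR_le => x; rewrite /thresh_decoder; have := P_ge0 x.1 x.2.
  by case: Rlt_dec => ? /=; do 2?case: Rle_dec => ? /=; lra.
rewrite sumR_plus sumR_split_lt P_sum1.
have := Rplus_le_compat _ _ _ _ (Rplus_le_compat_l 1 _ _ (Ropp_le_contravar _ _ low)) (Rlt_le _ _ err).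
by move/Rle_trans; apply; lra.
Qed.

Lemma thresh_info_bound r n (c0 : Sc n) (w : Sc n * (S n * Z n)) :
  (0 < n)%nat -> [pick c : Sc n] = Some c0 ->
  (if Rlt_dec r (info (Wr r) w) then Qj P (Wr r) w else 0)
  <= (if Rlt_dec (PcZ P (Wr r) w.1 w.2.2) (twopow n (- r))
      then (if w.1 == c0 then Qj P (Wr r) w else 0) else 0).
Proof.
move=> n0 pick_c0; have hW := fun_channel_is_channel (thresh_decoder r).
have Q0 := Qj_ge0 hW w.
case: (Rlt_dec r (info _ w)) => [ri|?] /=; last first.
  by case: Rlt_dec => ? /=; [case: (w.1 == c0)|]; lra.
case: w ri Q0 => c [s z] /= ri Q0.
case: (Rle_lt_or_eq_dec _ _ Q0) => [Qp|<-]; last first.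
  by case: Rlt_dec => ? /=; [case: (c == c0)|]; lra.
have dec : c = thresh_decoder r (s, z).
  by move: Qp; rewrite /Qj /fun_channel /=; case: eqP => // _; rewrite Rmult_0_l; lra.
have W1 : Wr r c s z = 1 by rewrite /fun_channel -dec eqxx.
have Pp : 0 < P n s z by move: Qp; rewrite /Qj /= W1 Rmult_1_l.
have PZp : 0 < PZ P z by have := P_le_PZ s z; lra.
have PcZ_ge_P : P n s z / PZ P z <= PcZ P (Wr r) c z.
  by have := PcZ_ge hW c s z; rewrite W1 Rmult_1_l.
have Pc0 : 0 < P n s z / PZ P z by apply: Rdiv_lt_0_compat.
have PcZp : 0 < PcZ P (Wr r) c z by lra.
move: ri; rewrite /info /= W1 => ri.
case: (Rlt_dec (ent (s, z)) r) => [low|high].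
  (* low density: the information density is at most the entropy density *)
  exfalso; apply: (Rlt_irrefl r); apply: Rlt_trans low; apply: Rlt_le_trans ri _.
  apply: nlog2_le; first by apply: Rdiv_lt_0_compat; lra.
  by rewrite /Rdiv Rmult_1_l; apply: Rinv_le_contravar.
have lt : twopow n r < 1 / PcZ P (Wr r) c z.
  by apply/lt_nlog2 => //; apply: Rdiv_lt_0_compat; lra.
have small : PcZ P (Wr r) c z < twopow n (- r).
  rewrite twopow_opp -(Rinv_inv (PcZ _ _ _ _)); apply: Rinv_lt_contravar.
    by apply: Rmult_lt_0_compat; [apply: twopow_pos | apply: Rinv_0_lt_compat].
  by rewrite /Rdiv Rmult_1_l in lt.
have cc0 : c = c0.
  by rewrite dec /thresh_decoder; case: Rlt_dec => [/high []|? /=]; rewrite pick_c0.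
by rewrite -cc0 eqxx; case: Rlt_dec => ? /=; lra.
Qed.

Lemma thresh_channel_Iup r : 0 < r -> ER_le (Iup P (Wr r)) (ERfin r).
Proof.
move=> r0; have hW := fun_channel_is_channel (thresh_decoder r).
apply: p_limsup_le; apply: (@Un_cv0_squeeze _ (fun n => twopow n (- r))); last first.
  by apply: twopow_cv0; lra.
move=> n n0; split; first by apply: prob_gt_ge0 => w; apply: Qj_ge0.
case E : [pick c : Sc n] => [c0|]; last first.
  rewrite /prob_gt sumR_eq0; first exact: Rlt_le (twopow_pos _ _).
  by move=> [c x]; move: E; case: pickP => [c' _ //|none _]; have := none c.
apply: Rle_trans _ (prob_output_unlikely_le (Wr r) c0 (Rlt_le _ _ (twopow_pos n (- r)))).
rewrite /prob_gt.
by apply: sumR_le => w; apply: thresh_info_bound.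
Qed.

Lemma Rlow_le_Hlow : ER_le (Rlow P d DE) (Hlow P).
Proof.
have := Hlow_ge0; case Hh : (Hlow P) => [h| |] //= h0; last exact: ER_le_pinf.
apply: ER_le_approx => eps eps0; set r := h + eps.
have ncv : ~ Un_cv (fun m => prob_lt (mu m) (@ent m) r) 0.
  apply: (@p_liminf_le_not_cv0 (fun m r => prob_lt (mu m) (@ent m) r) h).
    by rewrite -Hh; apply: ER_le_refl.
  by rewrite /r; lra.
have u0 m : 0 <= prob_lt (mu m) (@ent m) r by apply: prob_lt_ge0 => x; apply: P_ge0.
have [del [del0 freq]] := not_Un_cv0_frequently u0 ncv.
apply: ER_le_trans (Rlow_le_Iup (fun_channel_is_channel _) (thresh_channel_Dlow del0 freq)) _.
by apply: thresh_channel_Iup; rewrite /r; lra.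
Qed.

End Achievability.

Lemma Rlow_le_Hlow_of_DEmin' (Sc : nat -> finType) (d : forall m, S m -> Sc m -> R) DE :
  ER_le (DEmin' P d) (ERfin DE) -> ER_le (Rlow P d DE) (Hlow P).
Proof.
move=> hDE; have [_ [[g _] _]] := ER_inf_le_witness hDE (Rlt_plus_1 DE).
have argmin m s : {c : Sc m | forall c', d m s c <= d m s c'}.
  exact: constructive_indefinite_description (exists_argmin (d m s) (g m s)).
exact: (Rlow_le_Hlow hDE (fun m s => proj2_sig (argmin m s))).
Qed.

Section Converse.
Unset Implicit Arguments.
Variable W : forall m, S m -> S m -> Z m -> R.
Set Implicit Arguments.
Hypothesis hW : is_channel W.

Lemma correct_decoding_le n r t (c s : S n) (z : Z n) : (0 < n)%nat ->
  (if s == c then Qj P W (c, (s, z)) else 0)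
  <= (if Rlt_dec r (info W (c, (s, z))) then Qj P W (c, (s, z)) else 0)
     + W n c s z * (if Rlt_dec (ent (s, z)) t then P n s z else 0)
     + (if s == c then twopow n (r - t) * PcZj W c z else 0).
Proof.
move=> n0; have Q0 := Qj_ge0 hW (c, (s, z)).
have KX0 : 0 <= twopow n (r - t) * PcZj W c z.
  by apply: Rmult_le_pos; [apply: Rlt_le; apply: twopow_pos | apply: PcZj_ge0].
have WL0 : 0 <= W n c s z * (if Rlt_dec (ent (s, z)) t then P n s z else 0).
  by apply: Rmult_le_pos; [apply: W_ge0 | case: Rlt_dec => ? /=; [apply: P_ge0|lra]].
case: eqP => _; last by case: Rlt_dec => ? /=; lra.
case: Rlt_dec => [?|ir] /=; first lra.
have := Qj_le_twopow_PcZj hW n0 ir.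
by rewrite /Qj /=; case: Rlt_dec => [?|et] /=; [lra | move/(_ t et); lra].
Qed.

Lemma prob_correct_decoding_le n r t : (0 < n)%nat ->
  sumR (fun w : S n * (S n * Z n) => if w.2.1 == w.1 then Qj P W w else 0)
  <= prob_gt (Qj P W (m:=n)) (@info _ W n) r + prob_lt (mu n) (@ent n) t
     + twopow n (r - t).
Proof.
move=> n0; pose K := twopow n (r - t).
pose low x := if Rlt_dec (ent x) t then P n x.1 x.2 else 0.
apply: Rle_trans (_ : _ <= sumR (fun w => (if Rlt_dec r (info W w) then Qj P W w else 0)
   + W n w.1 w.2.1 w.2.2 * low w.2 + (if w.2.1 == w.1 then K * PcZj W w.1 w.2.2 else 0))) _.
  by apply: sumR_le => -[c [s z]]; apply: correct_decoding_le.
rewrite !sumR_plus (sumR_channel hW low).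
apply: Rplus_le_compat; first exact: Rle_refl.
rewrite (sumR_pair (fun c x => if x.1 == c then K * PcZj W c x.2 else 0)).
rewrite (@sumR_ext _ _ (fun c => K * sumR (fun z => PcZj W c z))).
  by rewrite sumR_scal PcZj_sum1 // Rmult_1_r; apply: Rle_refl.
move=> c; rewrite (sumR_pair (fun s z => if s == c then K * PcZj W c z else 0)).
rewrite -sumR_scal -(sumR_delta c (sumR (fun z => K * PcZj W c z))).
by apply: sumR_ext => s; case: eqP => // _; apply: sumR_eq0.
Qed.

Lemma Hlow_le_Iup : ER_le (Dlow P (hamming (S:=S)) W) (ERfin 0) -> ER_le (Hlow P) (Iup P W).
Proof.
move=> DW; rewrite Iup_info; apply: le_ER_inf => _ [r [-> cvr]].
rewrite Hlow_ent; apply: ER_sup_le => _ [t [-> cvt]] /=.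
apply: Rnot_lt_le => rt.
have [_ [[D [-> [lim_le lim_ne]]] /= Dhalf]] := ER_inf_le_witness DW (ltac:(lra) : 0 < 1 / 2).
apply: lim_ne; apply: ER_le_antisym lim_le _.
apply: (@ER_liminf_ge_cv _ (fun n => prob_gt (Qj P W (m:=n)) (@info _ W n) r
                                     + prob_lt (mu n) (@ent n) t + twopow n (r - t))).
  apply: Un_cv0_plus; first exact: Un_cv0_plus cvr cvt.
  by apply: twopow_cv0; lra.
move=> n n0; apply: Rle_trans (Rplus_le_compat_l 1 _ _ (Ropp_le_contravar _ _ (prob_correct_decoding_le r t n0))) _.
(* an incorrect reconstruction has block error 1 >= D *)
suff : sumR (Qj P W (m:=n)) <= prob_ge (Qj P W (m:=n)) (fun w => hamming w.2.1 w.1) D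
          + sumR (fun w : S n * (S n * Z n) => if w.2.1 == w.1 then Qj P W w else 0).
  by rewrite (Qj_sum1 hW); lra.
rewrite -sumR_plus; apply: sumR_le => w; rewrite /hamming; have := Qj_ge0 hW w.
by case: eqP => _ /=; case: Rle_dec => ? /=; lra.
Qed.

End Converse.

Lemma Rlow_hamming : Rlow P (hamming (S:=S)) 0 = Hlow P.
Proof.
apply: ER_le_antisym.
  apply: Rlow_le_Hlow_of_DEmin'; apply: ER_le_trans (ER_inf_le _) _.
    by exists (fun m (s : S m) => s).
  apply: p_limsup_le; apply: Un_cv0_eq0 => n.
  rewrite (prob_gt_fun_channel _ (fun m (x : S m * Z m) => x.1)); apply: sumR_eq0 => x.
  by rewrite /hamming eqxx; case: Rlt_dec => ? /=; lra.
rewrite /Rlow; case: excluded_middle_informative => ? /=; first exact: ER_le_pinf.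
by apply: le_ER_inf => _ [W [hW [DW ->]]]; apply: Hlow_le_Iup.
Qed.

End Source.

Theorem proposition1 :
  (forall (S Z Sc : nat -> finType) (P : forall m, S m -> Z m -> R)
          (d : forall m, S m -> Sc m -> R),
     is_pmf P ->
     (forall m s c, 0 <= d m s c) ->
     forall DE : R, ER_le (DEmin' P d) (ERfin DE) ->
     ER_le (Rlow P d DE) (Hlow P))
  /\
  (forall (S Z : nat -> finType) (P : forall m, S m -> Z m -> R),
     is_pmf P ->
     Rlow P (hamming (S := S)) 0 = Hlow P).
Proof.
split.
-
  by move=> S Z Sc P d hP _ DE; apply: Rlow_le_Hlow_of_DEmin'.
- by move=> S Z P hP; apply: Rlow_hamming.
Qed.
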